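(* Let $0<\theta<\pi$ and $\hat T>\theta$, and let $(\hat x,\hat T,\hat u)$ be the reference solution of problem (MD) described in the context. Then for every $\lambda\in\Lambda$: (i) $\alpha_0>0$; (ii) $H_u[\lambda](s)<0$ for all $s\in[0,\theta/\hat T)$.
   Context: Problem (MD) on $s\in[0,1]$, with state $(x_1,x_2,x_3,T)$ and scalar control $u$: minimize $T(0)$ subject to $\dot x_1=-T\sin x_3$, $\dot x_2=T\cos x_3$, $\dot x_3=Tu$, $\dot T=0$ a.e. on $[0,1]$; $x_1(0)=x_2(0)=x_3(0)=0$; $x_1(1)=b_1$, $x_2(1)=b_2$, $x_3(1)=\theta$; $-1\le u(s)\le1$ a.e. (It is the time-rescaled form of minimizing the final time $T$ for $\dot x_1=-\sin x_3$, $\dot x_2=\cos x_3$, $\dot x_3=u$.) Reference solution: $\hat T>\theta$ constant, $\hat u(s)=1$ on $[0,\theta/\hat T]$, $\hat u(s)=0$ on $(\theta/\hat T,1]$; $\hat x_3(s)=\hat Ts$ on $[0,\theta/\hat T]$ and $=\theta$ afterwards; $\hat x_1(s)=\cos(\hat Ts)-1$ on $[0,\theta/\hat T]$ and $=\hat T\sin\theta(\theta/\hat T-s)+\cos\theta-1$ afterwards; $\hat x_2(s)=\sin(\hat Ts)$ on $[0,\theta/\hat T]$ and $=\hat T\cos\theta(s-\theta/\hat T)+\sin\theta$ afterwards; $b_1:=\hat x_1(1)$, $b_2:=\hat x_2(1)$. Pre-Hamiltonian: $H[\lambda](x,T,u,s):=T\big(-\psi_1(s)\sin x_3+\psi_2(s)\cos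 x_3+\psi_3(s)u\big)$. A multiplier is $\lambda=(\alpha_0,\beta^0,\beta^1,\psi,\psi_T)$ with $\alpha_0\in\mathbb R$, $\beta^0,\beta^1\in\mathbb R^3$, $\psi=(\psi_1,\psi_2,\psi_3)$ and $\psi_T$ Lipschitz on $[0,1]$; terminal Lagrangian $\ell:=\alpha_0T(0)+\sum_{j=1}^3\beta^0_jx_j(0)+\sum_{j=1}^3\beta^1_jx_j(1)$. $\Lambda$ is the set of such $\lambda$ with: $\alpha_0\ge0$, $\alpha_0+|\beta^0|+|\beta^1|=1$; $-\dot\psi=H_x[\lambda]$ a.e. along the reference, $\psi(0)=-\beta^0$, $\psi(1)=\beta^1$; $-\dot\psi_T=H_T[\lambda]$ a.e. along the reference, $\psi_T(0)=-\alpha_0$, $\psi_T(1)=0$; and $H[\lambda](\hat x(s),\hat T,\hat u(s),s)=\min_{|v|\le1}H[\lambda](\hat x(s),\hat T,v,s)$ for a.e. $s$. $H_u[\lambda](s)$ denotes $\partial H/\partial u$ along the reference, i.e. $\hat T\psi_3(s)$. *)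

From Stdlib Require Import Reals Lra.
Open Scope R_scope.

Definition null_set (N : R -> Prop) : Prop :=
  forall eps : R, 0 < eps ->
  exists a b : nat -> R,
    (forall n, a n <= b n) /\
    (forall x, N x -> exists n, a n < x < b n) /\
    (forall n, sum_f_R0 (fun k => b k - a k) n <= eps).

Definition ae01 (P : R -> Prop) : Prop :=
  exists N : R -> Prop, null_set N /\
    forall s, 0 <= s <= 1 -> ~ N s -> P s.

Definition lipschitz01 (f : R -> R) : Prop :=
  exists L : R, forall s t, 0 <= s <= 1 -> 0 <= t <= 1 ->
    Rabs (f s - f t) <= L * Rabs (s - t).

Definition uhat (th Th s : R) : R := if Rle_dec s (th / Th) then 1 else 0.
Definition x3hat (th Th s : R) : R := if Rle_dec s (th / Th) then Th * s else th.
Definition x1hat (th Th s : R) : R :=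
  if Rle_dec s (th / Th) then cos (Th * s) - 1
  else Th * sin th * (th / Th - s) + cos th - 1.
Definition x2hat (th Th s : R) : R :=
  if Rle_dec s (th / Th) then sin (Th * s)
  else Th * cos th * (s - th / Th) + sin th.
Definition b1 (th Th : R) : R := x1hat th Th 1.
Definition b2 (th Th : R) : R := x2hat th Th 1.

(* H[lambda](x,T,u,s) = T(-psi1 sin x3 + psi2 cos x3 + psi3 u), with
   p1 p2 p3 standing for psi1(s) psi2(s) psi3(s). *)
Definition Hpre (p1 p2 p3 x1 x2 x3 T u : R) : R :=
  T * (- p1 * sin x3 + p2 * cos x3 + p3 * u).
Definition H_x1 (p1 p2 p3 x1 x2 x3 T u : R) : R := 0.
Definition H_x2 (p1 p2 p3 x1 x2 x3 T u : R) : R := 0.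
Definition H_x3 (p1 p2 p3 x1 x2 x3 T u : R) : R :=
  T * (- p1 * cos x3 - p2 * sin x3).
Definition H_T (p1 p2 p3 x1 x2 x3 T u : R) : R :=
  - p1 * sin x3 + p2 * cos x3 + p3 * u.
Definition H_u (p1 p2 p3 x1 x2 x3 T u : R) : R := T * p3.

(* Sanity: the partials are the actual partial derivatives of Hpre. *)
Lemma H_x3_correct p1 p2 p3 x1 x2 x3 T u :
  derivable_pt_lim (fun y => Hpre p1 p2 p3 x1 x2 y T u) x3
    (H_x3 p1 p2 p3 x1 x2 x3 T u).
Proof.
  unfold Hpre, H_x3.
  change (fun y => T * (- p1 * sin y + p2 * cos y + p3 * u)) with
    (mult_fct (fct_cte T) (plus_fct (plus_fct (mult_fct (fct_cte (- p1)) sin)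
       (mult_fct (fct_cte p2) cos)) (fct_cte (p3 * u)))).
  pose proof (derivable_pt_lim_mult (fct_cte (- p1)) sin x3 _ _
     (derivable_pt_lim_const (- p1) x3) (derivable_pt_lim_sin x3)) as D1.
  pose proof (derivable_pt_lim_mult (fct_cte p2) cos x3 _ _
     (derivable_pt_lim_const p2 x3) (derivable_pt_lim_cos x3)) as D2.
  pose proof (derivable_pt_lim_plus _ _ x3 _ _ D1 D2) as D3.
  pose proof (derivable_pt_lim_plus _ _ x3 _ _ D3 (derivable_pt_lim_const (p3 * u) x3)) as D4.
  pose proof (derivable_pt_lim_mult _ _ x3 _ _ (derivable_pt_lim_const T x3) D4) as D5.
  unfold fct_cte, plus_fct, mult_fct in D5 |- *.
  replace (T * (- p1 * cos x3 - p2 * sin x3)) with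
    (0 * (- p1 * sin x3 + p2 * cos x3 + p3 * u) +
     T * ((0 * sin x3 + - p1 * cos x3) + (0 * cos x3 + p2 * (- sin x3)) + 0)) by ring.
  exact D5.
Qed.

Lemma H_T_correct p1 p2 p3 x1 x2 x3 T u :
  derivable_pt_lim (fun y => Hpre p1 p2 p3 x1 x2 x3 y u) T
    (H_T p1 p2 p3 x1 x2 x3 T u).
Proof.
  unfold Hpre, H_T.
  pose proof (derivable_pt_lim_mult id (fct_cte (- p1 * sin x3 + p2 * cos x3 + p3 * u)) T _ _
     (derivable_pt_lim_id T) (derivable_pt_lim_const _ T)) as D.
  unfold fct_cte, mult_fct, id in D |- *.
  replace (1 * (- p1 * sin x3 + p2 * cos x3 + p3 * u) + T * 0) with
    (- p1 * sin x3 + p2 * cos x3 + p3 * u) in D by ring.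
  exact D.
Qed.

Definition Href (th Th : R) (psi1 psi2 psi3 : R -> R) (s v : R) : R :=
  Hpre (psi1 s) (psi2 s) (psi3 s)
       (x1hat th Th s) (x2hat th Th s) (x3hat th Th s) Th v.

Definition in_Lambda (th Th : R)
  (a0 b01 b02 b03 b11 b12 b13 : R) (psi1 psi2 psi3 psiT : R -> R) : Prop :=
  0 <= a0 /\
  a0 + sqrt (b01 ^ 2 + b02 ^ 2 + b03 ^ 2) + sqrt (b11 ^ 2 + b12 ^ 2 + b13 ^ 2) = 1 /\
  lipschitz01 psi1 /\ lipschitz01 psi2 /\ lipschitz01 psi3 /\ lipschitz01 psiT /\
  ae01 (fun s =>
    let args := (fun (F : R -> R -> R -> R -> R -> R -> R -> R -> R) =>
       F (psi1 s) (psi2 s) (psi3 s) (x1hat th Th s) (x2hat th Th s)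
         (x3hat th Th s) Th (uhat th Th s)) in
    derivable_pt_lim psi1 s (- args H_x1) /\
    derivable_pt_lim psi2 s (- args H_x2) /\
    derivable_pt_lim psi3 s (- args H_x3) /\
    derivable_pt_lim psiT s (- args H_T)) /\
  psi1 0 = - b01 /\ psi2 0 = - b02 /\ psi3 0 = - b03 /\
  psi1 1 = b11 /\ psi2 1 = b12 /\ psi3 1 = b13 /\
  psiT 0 = - a0 /\ psiT 1 = 0 /\
  ae01 (fun s => forall v, -1 <= v <= 1 ->
    Href th Th psi1 psi2 psi3 s (uhat th Th s) <= Href th Th psi1 psi2 psi3 s v).

From Stdlib Require Import Reals Lra Lia Classical.
From Coquelicot Require Import Coquelicot.
Open Scope R_scope.

(* The only analytic tool is a Lebesgue-free form of "a Lipschitz function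
   with zero derivative almost everywhere is constant" (null sets being given
   by small countable covers).  It is proved by real induction: a null set N
   admits, for each e > 0, a nondecreasing gauge of total variation <= e that
   grows at unit rate just right of every point of N, and this gauge absorbs
   the Lipschitz growth on N.  Consequences: null sets have empty interior,
   and a Lipschitz function vanishing a.e. on an interval vanishes on it.

   For a multiplier along the reference solution (Section below), psi1 and
   psi2 are constant; the minimum condition on the arc u = 0 forces psi3 = 0
   there, whence (psi1, psi2) = kappa (-sin th, cos th); integrating the
   adjoint equations gives psi3 = kappa (1 - cos (Th s - th)) on the arc
   u = 1 and psiT(0) - psiT(1) = kappa, i.e. a0 = -kappa.  If a0 = 0 every
   multiplier vanishes, contradicting the normalization, so a0 > 0, kappa < 0
   and H_u = Th psi3 < 0 on [0, th/Th). *)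

Lemma real_induction (a b : R) (P : R -> Prop) : a <= b -> P a ->
  (forall t, a < t <= b -> (forall s, a <= s < t -> P s) -> P t) ->
  (forall t, a <= t < b -> P t ->
     exists d, 0 < d /\ forall s, t < s < t + d -> s <= b -> P s) ->
  P b.
Proof.
  intros Hab Pa Hleft Hright.
  set (E := fun t => a <= t <= b /\ forall s, a <= s <= t -> P s).
  assert (Ea : E a).
  { split; [lra|]; intros s Hs; replace s with a by lra; exact Pa. }
  assert (Hbound : bound E) by (exists b; intros x [Hx _]; lra).
  destruct (completeness E Hbound (ex_intro _ a Ea)) as [c [Hub Hlub]].
  assert (Hac : a <= c) by (apply Hub, Ea).
  assert (Hcb : c <= b) by (apply Hlub; intros x [Hx _]; lra).
  assert (Pbelow : forall s, a <= s < c -> P s).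
  { intros s Hs; apply NNPP; intros nPs.
    assert (c <= s); [|lra].
    apply Hlub; intros x [Hx Px].
    destruct (Rle_dec x s) as [|Hxs]; [lra|].
    exfalso; apply nPs, Px; lra. }
  assert (Pc : P c).
  { destruct (Req_dec c a) as [->|]; [exact Pa|]. apply Hleft; [lra|exact Pbelow]. }
  destruct (Req_dec c b) as [<-|Hcb']; [exact Pc|].
  destruct (Hright c ltac:(lra) Pc) as [d [Hd Hstep]].
  set (c' := c + Rmin d (b - c) / 2).
  assert (Hm : 0 < Rmin d (b - c) <= d /\ Rmin d (b - c) <= b - c).
  { split; [split; [apply Rmin_glb_lt; lra|apply Rmin_l]|apply Rmin_r]. }
  assert (Ec' : E c').
  { unfold c'; split; [lra|]; intros s Hs.
    destruct (Rle_dec s c); [destruct (Req_dec s c) as [->|]; [exact Pc|apply Pbelow; lra]|].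
    apply Hstep; lra. }
  specialize (Hub c' Ec'); unfold c' in Hub; lra.
Qed.

Lemma sum_f_R0_mono (f : nat -> R) (m M : nat) :
  (forall k, 0 <= f k) -> (m <= M)%nat -> sum_f_R0 f m <= sum_f_R0 f M.
Proof. intros Hf Hm; induction Hm; simpl; [lra|specialize (Hf (S m0)); lra]. Qed.

Lemma sum_f_R0_term (f : nat -> R) (n M : nat) :
  (forall k, 0 <= f k) -> (n <= M)%nat -> f n <= sum_f_R0 f M.
Proof.
  intros Hf Hn; destruct n as [|n]; [apply (sum_f_R0_mono f 0 M Hf Hn)|].
  eapply Rle_trans; [|apply (sum_f_R0_mono f (S n) M Hf Hn)].
  simpl; pose proof (cond_pos_sum f n Hf); lra.
Qed.

(* A null set admits, for each e > 0, a nondecreasing gauge [Phi] with values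
   in [0,e] that grows at least at unit rate just to the right of each point
   of the set: Phi(t) is the length of the part of a small cover left of t. *)
Lemma null_set_gauge (N : R -> Prop) (e : R) : null_set N -> 0 < e ->
  exists Phi : R -> R,
    (forall t t', t <= t' -> Phi t <= Phi t') /\
    (forall t, 0 <= Phi t <= e) /\
    (forall t, N t -> exists d, 0 < d /\
       forall s, t < s < t + d -> s - t <= Phi s - Phi t).
Proof.
  intros HN He.
  destruct (HN e He) as (a & b & Hab & Hcov & Hsum).
  set (len := fun n t => Rmax 0 (Rmin (b n) t - a n)).
  assert (len_pos : forall n t, 0 <= len n t) by (intros; apply Rmax_l).
  assert (len_le : forall n t, len n t <= b n - a n).
  { intros n t; specialize (Hab n); unfold len, Rmax, Rmin; repeat destruct Rle_dec; lra. }
  assert (len_incr : forall n t t', t <= t' -> 0 <= len n t' - len n t).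
  { intros n t t' Ht; unfold len, Rmax, Rmin; repeat destruct Rle_dec; lra. }
  set (Psi := fun m t => sum_f_R0 (fun n => len n t) m).
  assert (Psi_le : forall m t, Psi m t <= e).
  { intros m t; apply Rle_trans with (2 := Hsum m); apply sum_growing; intro; apply len_le. }
  assert (Hlub : forall t, {p | is_lub (fun x => exists m, x = Psi m t) p}).
  { intro t; apply completeness; [exists e; intros x [m ->]; apply Psi_le|exists (Psi 0%nat t), 0%nat; reflexivity]. }
  set (Phi := fun t => proj1_sig (Hlub t)).
  assert (Phi_ge : forall m t, Psi m t <= Phi t).
  { intros m t; apply (proj1 (proj2_sig (Hlub t))); exists m; reflexivity. }
  assert (Phi_incr : forall n t t', t <= t' -> len n t' - len n t <= Phi t' - Phi t).
  { intros n t t' Ht.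
    cut (Phi t <= Phi t' - (len n t' - len n t)); [lra|].
    apply (proj2 (proj2_sig (Hlub t))); intros x [m ->].
    assert (Psi m t <= Psi (Nat.max m n) t) by (apply sum_f_R0_mono; [|lia]; auto).
    assert (len n t' - len n t <= Psi (Nat.max m n) t' - Psi (Nat.max m n) t).
    { unfold Psi; rewrite <- minus_sum.
      apply (sum_f_R0_term (fun i => len i t' - len i t)); [|lia]; auto. }
    specialize (Phi_ge (Nat.max m n) t'); lra. }
  exists Phi; split; [|split].
  - intros t t' Ht; specialize (Phi_incr 0%nat t t' Ht); specialize (len_incr 0%nat t t' Ht); lra.
  - intro t; split.
    + apply Rle_trans with (Psi 0%nat t); [apply len_pos|apply Phi_ge].
    + apply (proj2 (proj2_sig (Hlub t))); intros x [m ->]; apply Psi_le.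
  - intros t Nt; destruct (Hcov t Nt) as [n Hn].
    exists (b n - t); split; [lra|]; intros s Hs.
    replace (s - t) with (len n s - len n t)
      by (unfold len, Rmax, Rmin; repeat destruct Rle_dec; lra).
    apply Phi_incr; lra.
Qed.

Definition lipschitz_on (a b L : R) (h : R -> R) : Prop :=
  forall x y, a <= x <= b -> a <= y <= b -> Rabs (h x - h y) <= L * Rabs (x - y).

Lemma lipschitz_bound_left_limit (h G : R -> R) (a t L : R) :
  0 <= L -> a < t -> lipschitz_on a t L h ->
  (forall s s', s <= s' -> G s <= G s') ->
  (forall s, a <= s < t -> Rabs (h s - h a) <= G s) ->
  Rabs (h t - h a) <= G t.
Proof.
  intros HL Hat Hlip HG Hbelow.
  apply Rle_plus_epsilon; intros eps Heps.
  set (w := Rmin (t - a) (eps / (L + 1)) / 2).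
  assert (Hw : 0 < w <= t - a /\ w <= eps / (L + 1)).
  { pose proof (Rmin_l (t - a) (eps / (L + 1))); pose proof (Rmin_r (t - a) (eps / (L + 1))).
    assert (0 < Rmin (t - a) (eps / (L + 1))).
    { apply Rmin_glb_lt; [lra|apply Rdiv_lt_0_compat; lra]. }
    unfold w; lra. }
  assert (HLw : L * w <= eps).
  { apply Rle_trans with (L * (eps / (L + 1))); [apply Rmult_le_compat_l; lra|].
    apply Rmult_le_reg_r with (L + 1); [lra|].
    replace (L * (eps / (L + 1)) * (L + 1)) with (L * eps) by (field; lra); nra. }
  pose proof (Hlip t (t - w) ltac:(lra) ltac:(lra)) as Hstep.
  replace (t - (t - w)) with w in Hstep by ring; rewrite (Rabs_right w) in Hstep by lra.
  pose proof (Hbelow (t - w) ltac:(lra)); pose proof (HG (t - w) t ltac:(lra)).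
  pose proof (Rabs_triang (h t - h (t - w)) (h (t - w) - h a)).
  replace (h t - h (t - w) + (h (t - w) - h a)) with (h t - h a) in * by ring.
  lra.
Qed.

Lemma derivable_zero_right_increment (h : R -> R) (t e : R) :
  derivable_pt_lim h t 0 -> 0 < e ->
  exists d, 0 < d /\ forall y, t < y < t + d -> Rabs (h y - h t) <= e * (y - t).
Proof.
  intros Hd He; destruct (Hd e He) as [del Hdel].
  exists del; split; [apply cond_pos|]; intros y Hy.
  specialize (Hdel (y - t) ltac:(lra) ltac:(rewrite Rabs_right; lra)).
  replace (t + (y - t)) with y in Hdel by ring; rewrite Rminus_0_r in Hdel.
  replace (h y - h t) with ((h y - h t) / (y - t) * (y - t)) by (field; lra).
  rewrite Rabs_mult, (Rabs_right (y - t)) by lra.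
  left; apply Rmult_lt_compat_r; lra.
Qed.

(* Real induction on [|h t - h a| <= e(t-a) + L(Phi t - Phi a)], [Phi] the
   gauge of the null set: off the null set the derivative controls the
   growth, on it the Lipschitz bound is absorbed by the growth of [Phi]. *)
Lemma lipschitz_ae_deriv0_increment (N : R -> Prop) (h : R -> R) (a b L e : R) :
  null_set N -> a <= b -> 0 <= L -> 0 < e -> lipschitz_on a b L h ->
  (forall t, a <= t < b -> ~ N t -> derivable_pt_lim h t 0) ->
  Rabs (h b - h a) <= e * (b - a) + L * e.
Proof.
  intros HN Hab HL He Hlip Hder.
  destruct (null_set_gauge N e HN He) as (Phi & Phi_incr & Phi_bnd & Phi_N).
  set (G := fun t => e * (t - a) + L * (Phi t - Phi a)).
  assert (HG : forall s s', s <= s' -> G s <= G s').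
  { intros s s' Hs; unfold G; pose proof (Phi_incr s s' Hs).
    assert (L * Phi s <= L * Phi s') by (apply Rmult_le_compat_l; lra); nra. }
  assert (Hind : Rabs (h b - h a) <= G b).
  { apply (real_induction a b (fun t => Rabs (h t - h a) <= G t)); [exact Hab| | |].
    - unfold G; rewrite Rminus_diag, Rabs_R0; lra.
    - intros t Ht Hbelow; apply (lipschitz_bound_left_limit h G a t L); auto; [lra|].
      intros x y Hx Hy; apply Hlip; lra.
    - intros t Ht Pt.
      cut (exists d, 0 < d /\ forall s, t < s < t + d -> s <= b ->
             Rabs (h s - h t) <= G s - G t).
      { intros [d [Hd Hinc]]; exists d; split; [exact Hd|]; intros s Hs Hsb.
        specialize (Hinc s Hs Hsb).
        pose proof (Rabs_triang (h s - h t) (h t - h a)).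
        replace (h s - h t + (h t - h a)) with (h s - h a) in * by ring; lra. }
      destruct (classic (N t)) as [Nt|Nt].
      + destruct (Phi_N t Nt) as [d [Hd Hgrow]]; exists d; split; [exact Hd|].
        intros s Hs Hsb; specialize (Hgrow s Hs).
        pose proof (Hlip s t ltac:(lra) ltac:(lra)) as Hl.
        rewrite (Rabs_right (s - t)) in Hl by lra.
        assert (L * (s - t) <= L * (Phi s - Phi t)) by (apply Rmult_le_compat_l; lra).
        unfold G; nra.
      + destruct (derivable_zero_right_increment h t e (Hder t Ht Nt) He) as [d [Hd Hinc]].
        exists d; split; [exact Hd|]; intros s Hs _; specialize (Hinc s Hs).
        pose proof (Phi_incr t s ltac:(lra)).
        assert (L * Phi t <= L * Phi s) by (apply Rmult_le_compat_l; lra).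
        unfold G; nra. }
  assert (L * (Phi b - Phi a) <= L * e).
  { apply Rmult_le_compat_l; [lra|]; pose proof (Phi_bnd a); pose proof (Phi_bnd b); lra. }
  unfold G in Hind; lra.
Qed.

Lemma Rabs_le_eps_zero (x : R) : (forall eps, 0 < eps -> Rabs x <= eps) -> x = 0.
Proof.
  intros Hx; destruct (Req_dec x 0) as [|Hne]; [assumption|].
  pose proof (Rabs_pos_lt x Hne); specialize (Hx (Rabs x / 2)); lra.
Qed.

Lemma lipschitz_ae_deriv0_const (N : R -> Prop) (h : R -> R) (a b L : R) :
  null_set N -> a <= b -> lipschitz_on a b L h ->
  (forall t, a <= t < b -> ~ N t -> derivable_pt_lim h t 0) ->
  h b = h a.
Proof.
  intros HN Hab Hlip Hder.
  assert (Hlip' : lipschitz_on a b (Rabs L) h).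
  { intros x y Hx Hy; eapply Rle_trans; [apply Hlip; auto|].
    apply Rmult_le_compat_r; [apply Rabs_pos|apply Rle_abs]. }
  pose proof (Rabs_pos L).
  apply Rminus_diag_uniq, Rabs_le_eps_zero; intros eps Heps.
  set (e := eps / (b - a + Rabs L + 1)).
  assert (He : 0 < e) by (apply Rdiv_lt_0_compat; lra).
  pose proof (lipschitz_ae_deriv0_increment N h a b (Rabs L) e HN Hab
                 (Rabs_pos L) He Hlip' Hder).
  assert (e * (b - a) + Rabs L * e <= eps).
  { replace (e * (b - a) + Rabs L * e) with (eps * ((b - a + Rabs L) / (b - a + Rabs L + 1)))
      by (unfold e; field; lra).
    rewrite <- (Rmult_1_r eps) at 2; apply Rmult_le_compat_l; [lra|].
    apply Rmult_le_reg_r with (b - a + Rabs L + 1); [lra|].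
    field_simplify; lra. }
  lra.
Qed.

(* A null set has empty interior: otherwise the identity map, vacuously of
   zero derivative off the null set, would be constant on a subinterval. *)
Lemma null_set_avoid (N : R -> Prop) (c d : R) :
  null_set N -> c < d -> exists s, c < s < d /\ ~ N s.
Proof.
  intros HN Hcd; apply NNPP; intros Hall.
  assert (HinN : forall s, c < s < d -> N s).
  { intros s Hs; apply NNPP; intro; apply Hall; eauto. }
  assert (c + 2 * (d - c) / 3 = c + (d - c) / 3); [|lra].
  apply (lipschitz_ae_deriv0_const N (fun x => x) _ _ 1 HN); [lra| |].
  - intros x y _ _; lra.
  - intros t Ht Nt; exfalso; apply Nt, HinN; lra.
Qed.

Lemma lipschitz_on_plus (f g : R -> R) (a b Lf Lg : R) :
  lipschitz_on a b Lf f -> lipschitz_on a b Lg g ->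
  lipschitz_on a b (Lf + Lg) (fun s => f s + g s).
Proof.
  intros Hf Hg x y Hx Hy.
  replace (f x + g x - (f y + g y)) with ((f x - f y) + (g x - g y)) by ring.
  eapply Rle_trans; [apply Rabs_triang|].
  pose proof (Hf x y Hx Hy); pose proof (Hg x y Hx Hy); lra.
Qed.

Lemma lipschitz_on_bounded_deriv (g g' : R -> R) (a b M : R) :
  (forall c, derivable_pt_lim g c (g' c)) -> (forall c, Rabs (g' c) <= M) ->
  lipschitz_on a b M g.
Proof.
  intros Hd HM x y _ _.
  destruct (MVT_abs g g' y x (fun c _ => Hd c)) as [c [-> _]].
  apply Rmult_le_compat_r; [apply Rabs_pos|apply HM].
Qed.

Lemma derivable_pt_lim_locally_const (f : R -> R) (x d : R) :
  0 < d -> (forall y, Rabs (y - x) < d -> f y = f x) -> derivable_pt_lim f x 0.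
Proof.
  intros Hd Hloc e He; exists (mkposreal d Hd); intros hh Hh Hhd; simpl in Hhd.
  rewrite Hloc by (replace (x + hh - x) with hh by ring; exact Hhd).
  replace ((f x - f x) / hh - 0) with 0 by (field; exact Hh).
  rewrite Rabs_R0; exact He.
Qed.

Lemma derivable_pt_lim_plus_opp (f g : R -> R) (x l : R) :
  derivable_pt_lim f x l -> derivable_pt_lim g x (- l) ->
  derivable_pt_lim (fun s => f s + g s) x 0.
Proof.
  intros Hf Hg; replace 0 with (l + - l) by ring; exact (derivable_pt_lim_plus f g x _ _ Hf Hg).
Qed.

Lemma ae01_impl (P Q : R -> Prop) :
  ae01 P -> (forall s, 0 <= s <= 1 -> P s -> Q s) -> ae01 Q.
Proof. intros [N [HN HP]] HPQ; exists N; split; [exact HN|]; auto. Qed.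

Lemma lipschitz01_on (f : R -> R) :
  lipschitz01 f -> exists L, forall a b, 0 <= a -> b <= 1 -> lipschitz_on a b L f.
Proof. intros [L HL]; exists L; intros a b Ha Hb x y Hx Hy; apply HL; lra. Qed.

Lemma ae01_deriv0_const (h : R -> R) (a b L : R) :
  0 <= a <= b -> b <= 1 -> lipschitz_on a b L h ->
  ae01 (fun t => a <= t < b -> derivable_pt_lim h t 0) -> h b = h a.
Proof.
  intros Hab Hb Hlip [N [HN Hd]].
  apply (lipschitz_ae_deriv0_const N h a b L HN); [lra|exact Hlip|].
  intros t Ht Nt; apply Hd; [lra|exact Nt|exact Ht].
Qed.

Lemma lipschitz01_ae_zero (f : R -> R) (c d : R) :
  lipschitz01 f -> 0 <= c < d -> d <= 1 ->
  ae01 (fun s => c < s <= d -> f s = 0) -> forall s, c <= s <= d -> f s = 0.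
Proof.
  intros Hlip Hcd Hd [N [HN Hzero]] s Hs.
  destruct (lipschitz01_on f Hlip) as [L HL].
  apply Rabs_le_eps_zero; intros eps Heps.
  set (w := eps / (Rabs L + 1)).
  assert (Hw : 0 < w) by (apply Rdiv_lt_0_compat; [lra|pose proof (Rabs_pos L); lra]).
  assert (HLw : Rabs L * w <= eps).
  { pose proof (Rabs_pos L); apply Rmult_le_reg_r with (Rabs L + 1); [lra|].
    unfold w; replace (Rabs L * (eps / (Rabs L + 1)) * (Rabs L + 1)) with (Rabs L * eps)
      by (field; lra); nra. }
  destruct (null_set_avoid N (Rmax c (s - w)) (Rmin d (s + w)) HN) as [s' [Hs' Ns']].
  { unfold Rmax, Rmin; repeat destruct Rle_dec; lra. }
  assert (Hs'2 : c < s' <= d /\ Rabs (s - s') <= w).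
  { revert Hs'; unfold Rmax, Rmin; repeat destruct Rle_dec; intros;
      (split; [lra|apply Rabs_le; lra]). }
  pose proof (HL 0 1 ltac:(lra) ltac:(lra) s s' ltac:(lra) ltac:(lra)) as Hss'.
  rewrite (Hzero s' ltac:(lra) Ns' (proj1 Hs'2)), Rminus_0_r in Hss'.
  assert (L * Rabs (s - s') <= Rabs L * w).
  { apply Rle_trans with (Rabs L * Rabs (s - s')).
    - apply Rmult_le_compat_r; [apply Rabs_pos|apply Rle_abs].
    - apply Rmult_le_compat_l; [apply Rabs_pos|lra]. }
  lra.
Qed.

Lemma cos_lt_1_neg (x : R) : - PI < x < 0 -> cos x < 1.
Proof. intros Hx; rewrite <- (cos_neg x), <- cos_0; apply cos_decreasing_1; lra. Qed.

Section ReferenceMultiplier.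

Variables (th Th : R) (psi1 psi2 psi3 psiT : R -> R).
Hypothesis Hth : 0 < th < PI.
Hypothesis HTh : th < Th.
Hypotheses (Lip1 : lipschitz01 psi1) (Lip2 : lipschitz01 psi2)
           (Lip3 : lipschitz01 psi3) (LipT : lipschitz01 psiT).
Hypothesis Hadj : ae01 (fun s =>
  derivable_pt_lim psi1 s 0 /\ derivable_pt_lim psi2 s 0 /\
  derivable_pt_lim psi3 s
    (Th * (psi1 s * cos (x3hat th Th s) + psi2 s * sin (x3hat th Th s))) /\
  derivable_pt_lim psiT s
    (- (- psi1 s * sin (x3hat th Th s) + psi2 s * cos (x3hat th Th s)
        + psi3 s * uhat th Th s))).
Hypothesis Hmin : ae01 (fun s => forall v, -1 <= v <= 1 ->
  Href th Th psi1 psi2 psi3 s (uhat th Th s) <= Href th Th psi1 psi2 psi3 s v).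

Lemma switch_time_bounds : 0 < th / Th < 1.
Proof.
  split; [apply Rdiv_lt_0_compat; lra|].
  apply Rmult_lt_reg_r with Th; [lra|]; field_simplify; lra.
Qed.

Lemma switch_time_angle : Th * (th / Th) = th.
Proof. field; lra. Qed.

(* The adjoint equations for x1, x2 make psi1 and psi2 constant. *)
Lemma psi12_const (s : R) : 0 <= s <= 1 -> psi1 s = psi1 0 /\ psi2 s = psi2 0.
Proof.
  intros Hs; destruct (lipschitz01_on _ Lip1) as [L1 HL1];
    destruct (lipschitz01_on _ Lip2) as [L2 HL2].
  split; [apply (ae01_deriv0_const psi1 0 s L1)|apply (ae01_deriv0_const psi2 0 s L2)];
    try lra; try (apply HL1 || apply HL2; lra);
    apply (ae01_impl _ _ Hadj); intros t _ Ht _; apply Ht.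
Qed.

(* On the arc u = 0 the minimum condition forces psi3 = 0 a.e., hence
   everywhere by continuity. *)
Lemma psi3_after_switch (s : R) : th / Th <= s <= 1 -> psi3 s = 0.
Proof.
  pose proof switch_time_bounds.
  apply (lipschitz01_ae_zero psi3 (th / Th) 1 Lip3); [lra|lra|].
  apply (ae01_impl _ _ Hmin); intros t _ Hm Ht.
  pose proof (Hm 1 ltac:(lra)) as Hm1; pose proof (Hm (-1) ltac:(lra)) as Hm2.
  unfold Href, Hpre, uhat in Hm1, Hm2.
  destruct (Rle_dec t (th / Th)); [lra|]; nra.
Qed.

(* The coefficient of the switching function on the arc u = 1. *)
Definition kappa : R := - psi1 0 * sin th + psi2 0 * cos th.

(* Since psi3 vanishes on the arc u = 0, so does its derivative, which is
   Th times the component of (psi1, psi2) along the final heading. *)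
Lemma costate_orthogonal : psi1 0 * cos th + psi2 0 * sin th = 0.
Proof.
  pose proof switch_time_bounds as Hsw.
  destruct Hadj as [N [HN Hd]].
  destruct (null_set_avoid N (th / Th) 1 HN ltac:(lra)) as [s [Hs Ns]].
  destruct (Hd s ltac:(lra) Ns) as (_ & _ & Hd3 & _).
  assert (Hd0 : derivable_pt_lim psi3 s 0).
  { apply derivable_pt_lim_locally_const with (Rmin (s - th / Th) (1 - s)).
    - apply Rmin_glb_lt; lra.
    - intros y Hy; apply Rabs_def2 in Hy.
      pose proof (Rmin_l (s - th / Th) (1 - s)); pose proof (Rmin_r (s - th / Th) (1 - s)).
      rewrite !psi3_after_switch; lra. }
  pose proof (uniqueness_limite _ _ _ _ Hd3 Hd0) as E.
  unfold x3hat in E; destruct (Rle_dec s (th / Th)); [lra|].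
  destruct (psi12_const s ltac:(lra)) as [-> ->] in E.
  apply Rmult_integral in E; destruct E; [lra|assumption].
Qed.

Lemma costate_polar : psi1 0 = - kappa * sin th /\ psi2 0 = kappa * cos th.
Proof.
  pose proof (sin2_cos2 th) as S; pose proof costate_orthogonal as O; unfold Rsqr in S.
  unfold kappa; split.
  - transitivity (psi1 0 * (sin th * sin th + cos th * cos th)
                  - cos th * (psi1 0 * cos th + psi2 0 * sin th)); [rewrite S, O|]; ring.
  - transitivity (psi2 0 * (sin th * sin th + cos th * cos th)
                  - sin th * (psi1 0 * cos th + psi2 0 * sin th)); [rewrite S, O|]; ring.
Qed.

(* On the arc u = 1, psi3 s = kappa (1 - cos (Th s - th)): both sides have
   the same derivative a.e. and vanish at the switching time. *)
Lemma psi3_before_switch (s : R) :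
  0 <= s <= th / Th -> psi3 s = kappa * (1 - cos (Th * s - th)).
Proof.
  intros Hs; pose proof switch_time_bounds.
  set (F := fun t => kappa * (cos (Th * t - th) - 1)).
  set (F' := fun t => - (kappa * Th * sin (Th * t - th))).
  assert (HF : forall t, derivable_pt_lim F t (F' t)).
  { intro t; apply is_derive_Reals; unfold F, F'; auto_derive; [exact I|unfold Rminus; ring]. }
  destruct (lipschitz01_on _ Lip3) as [L3 HL3].
  assert (E : psi3 (th / Th) + F (th / Th) = psi3 s + F s).
  { apply (ae01_deriv0_const (fun t => psi3 t + F t) s (th / Th) (L3 + Rabs kappa * Th));
      try lra.
    - apply lipschitz_on_plus; [apply HL3; lra|].
      apply (lipschitz_on_bounded_deriv F F'); [exact HF|intro c; unfold F'].
      rewrite Rabs_Ropp, !Rabs_mult, (Rabs_right Th) by lra.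
      pose proof (Rabs_pos kappa); pose proof (Rabs_le _ _ (SIN_bound (Th * c - th))).
      rewrite <- (Rmult_1_r (Rabs kappa * Th)) at 2.
      apply Rmult_le_compat_l; [nra|assumption].
    - apply (ae01_impl _ _ Hadj); intros t Ht0 (_ & _ & Hd3 & _) Ht.
      apply (derivable_pt_lim_plus_opp psi3 F t (kappa * Th * sin (Th * t - th)));
        [|exact (HF t)].
      replace (kappa * Th * sin (Th * t - th)) with
        (Th * (psi1 t * cos (x3hat th Th t) + psi2 t * sin (x3hat th Th t))); [exact Hd3|].
      unfold x3hat; destruct (Rle_dec t (th / Th)); [|lra].
      destruct (psi12_const t ltac:(lra)) as [-> ->]; destruct costate_polar as [-> ->].
      rewrite sin_minus; ring. }
  unfold F in E; rewrite switch_time_angle, psi3_after_switch, Rminus_diag, cos_0 in E by lra.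
  lra.
Qed.

(* The adjoint equation for T gives psiT' = -kappa a.e. on both arcs. *)
Lemma psiT_increment : psiT 0 - psiT 1 = kappa.
Proof.
  pose proof switch_time_bounds.
  destruct (lipschitz01_on _ LipT) as [LT HLT].
  assert (E : psiT 1 + kappa * 1 = psiT 0 + kappa * 0).
  { apply (ae01_deriv0_const (fun t => psiT t + kappa * t) 0 1 (LT + Rabs kappa)); try lra.
    - apply lipschitz_on_plus; [apply HLT; lra|].
      apply (lipschitz_on_bounded_deriv _ (fun _ => kappa)); [|intro; lra].
      intro c; apply is_derive_Reals; auto_derive; [exact I|unfold Rminus; ring].
    - apply (ae01_impl _ _ Hadj); intros t Ht0 (_ & _ & _ & HdT) Ht.
      apply (derivable_pt_lim_plus_opp psiT (fun t => kappa * t) t (- kappa));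
        [|apply is_derive_Reals; auto_derive; [exact I|unfold Rminus; ring]].
      replace (- kappa) with (- (- psi1 t * sin (x3hat th Th t) + psi2 t * cos (x3hat th Th t)
                                 + psi3 t * uhat th Th t)); [exact HdT|].
      pose proof (sin2_cos2 th) as S; unfold Rsqr in S.
      destruct (psi12_const t Ht0) as [-> ->]; destruct costate_polar as [-> ->].
      unfold x3hat, uhat; destruct (Rle_dec t (th / Th)).
      + rewrite psi3_before_switch, cos_minus by lra; ring.
      + rewrite psi3_after_switch by lra.
        transitivity (- kappa * (sin th * sin th + cos th * cos th)); [ring|rewrite S; ring]. }
  lra.
Qed.

Lemma costate_trivial : kappa = 0 ->
  psi1 0 = 0 /\ psi2 0 = 0 /\ psi3 0 = 0 /\ psi1 1 = 0 /\ psi2 1 = 0 /\ psi3 1 = 0.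
Proof.
  intros Hk; pose proof switch_time_bounds.
  destruct costate_polar as [H1 H2]; rewrite Hk in H1, H2.
  destruct (psi12_const 1 ltac:(lra)) as [H11 H21].
  rewrite psi3_before_switch, psi3_after_switch, Hk by lra.
  repeat split; lra.
Qed.

Lemma Hu_before_switch (s : R) : kappa < 0 -> 0 <= s < th / Th -> Th * psi3 s < 0.
Proof.
  intros Hk Hs; rewrite psi3_before_switch by lra.
  assert (Th * s < th) by (rewrite <- switch_time_angle; apply Rmult_lt_compat_l; lra).
  assert (0 <= Th * s) by nra.
  pose proof (cos_lt_1_neg (Th * s - th) ltac:(lra)).
  assert (kappa * (1 - cos (Th * s - th)) < 0) by nra.
  nra.
Qed.

End ReferenceMultiplier.

Lemma adjoint_explicit (th Th : R) (psi1 psi2 psi3 psiT : R -> R) :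
  ae01 (fun s =>
    let args := (fun (F : R -> R -> R -> R -> R -> R -> R -> R -> R) =>
       F (psi1 s) (psi2 s) (psi3 s) (x1hat th Th s) (x2hat th Th s)
         (x3hat th Th s) Th (uhat th Th s)) in
    derivable_pt_lim psi1 s (- args H_x1) /\
    derivable_pt_lim psi2 s (- args H_x2) /\
    derivable_pt_lim psi3 s (- args H_x3) /\
    derivable_pt_lim psiT s (- args H_T)) ->
  ae01 (fun s =>
    derivable_pt_lim psi1 s 0 /\ derivable_pt_lim psi2 s 0 /\
    derivable_pt_lim psi3 s
      (Th * (psi1 s * cos (x3hat th Th s) + psi2 s * sin (x3hat th Th s))) /\
    derivable_pt_lim psiT s
      (- (- psi1 s * sin (x3hat th Th s) + psi2 s * cos (x3hat th Th s)
          + psi3 s * uhat th Th s))).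
Proof.
  intros Hadj; apply (ae01_impl _ _ Hadj); intros s _.
  cbv zeta; unfold H_x1, H_x2, H_x3, H_T.
  rewrite Ropp_0; replace (- (Th * (- psi1 s * cos (x3hat th Th s) - psi2 s * sin (x3hat th Th s))))
    with (Th * (psi1 s * cos (x3hat th Th s) + psi2 s * sin (x3hat th Th s))) by ring.
  intros Hs; exact Hs.
Qed.

Theorem mainTheorem15 :
  forall (th Th : R), 0 < th < PI -> th < Th ->
  forall (a0 b01 b02 b03 b11 b12 b13 : R) (psi1 psi2 psi3 psiT : R -> R),
    in_Lambda th Th a0 b01 b02 b03 b11 b12 b13 psi1 psi2 psi3 psiT ->
    0 < a0 /\
    (forall s, 0 <= s < th / Th ->
       H_u (psi1 s) (psi2 s) (psi3 s) (x1hat th Th s) (x2hat th Th s)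
           (x3hat th Th s) Th (uhat th Th s) < 0).
Proof.
  intros th Th Hth HTh a0 b01 b02 b03 b11 b12 b13 psi1 psi2 psi3 psiT HL.
  destruct HL as (Ha0 & Hnorm & Lip1 & Lip2 & Lip3 & LipT & Had & e01 & e02 & e03
                  & e11 & e12 & e13 & eT0 & eT1 & Hmin).
  apply adjoint_explicit in Had.
  (* transversality for T identifies a0 with -kappa *)
  assert (Ha0k : a0 = - kappa th psi1 psi2).
  { pose proof (psiT_increment th Th psi1 psi2 psi3 psiT Hth HTh
                  Lip1 Lip2 Lip3 LipT Had Hmin); lra. }
  (* a0 = 0 would make all multipliers vanish, against the normalization *)
  assert (Ha0pos : 0 < a0).
  { destruct (Req_dec a0 0) as [Hz|]; [exfalso|lra].
    destruct (costate_trivial th Th psi1 psi2 psi3 psiT Hth HTh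
                Lip1 Lip2 Lip3 Had Hmin ltac:(lra)) as (z1 & z2 & z3 & z4 & z5 & z6).
    replace b01 with 0 in Hnorm by lra; replace b02 with 0 in Hnorm by lra;
    replace b03 with 0 in Hnorm by lra; replace b11 with 0 in Hnorm by lra;
    replace b12 with 0 in Hnorm by lra; replace b13 with 0 in Hnorm by lra.
    replace (0 ^ 2 + 0 ^ 2 + 0 ^ 2) with 0 in Hnorm by ring.
    rewrite sqrt_0 in Hnorm; lra. }
  split; [exact Ha0pos|].
  intros s Hs; unfold H_u.
  exact (Hu_before_switch th Th psi1 psi2 psi3 psiT Hth HTh
           Lip1 Lip2 Lip3 Had Hmin s ltac:(lra) Hs).
Qed.
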